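(* Let $H$ be a numerical semigroup minimally generated by $a_1<a_2<\dots<a_n$ with $n>1$. If $H$ is quadratic, then (a) there exist $k,\ell\geq 2$ such that $a_1$ divides $a_k+a_\ell$; (b) $2a_i\in\langle a_1,\dots,a_{i-1},a_{i+1},\dots,a_n\rangle$ for all $2\leq i\leq n$.
   Context: A numerical semigroup is a submonoid of $\mathbb{N}$ with finite complement. $K$ is a field, $S=K[x_1,\dots,x_n]$ and $I_H=\ker(S\to K[t],\ x_i\mapsto t^{a_i})$. For $0\neq f\in S$, $f^*$ is its homogeneous component of least degree, and $I_H^*=(f^*:0\ne f\in I_H)$. $H$ is quadratic if $I_H^*$ is generated by homogeneous polynomials of degree 2. $\langle b_1,\dots,b_m\rangle$ denotes the semigroup generated by $b_1,\dots,b_m$. *)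

From HB Require Import structures.
From mathcomp Require Import all_boot all_order all_algebra.
From mathcomp Require Import mpoly.
Set Implicit Arguments. Unset Strict Implicit. Unset Printing Implicit Defensive.
Import Order.TTheory GRing.Theory.
Local Open Scope ring_scope.

(* Generators a_1 < ... < a_n are represented as a : nat -> nat, with
   a_{i+1} := a i for i < n (0-based indices); a values at i >= n are irrelevant.
   The variable x_{i+1} of S is 'X_i for i : 'I_n. *)

Definition in_sg (n : nat) (a : nat -> nat) (P : pred nat) (x : nat) : Prop :=
  exists c : nat -> nat, x = (\sum_(j < n | P j) c j * a j)%N.

Definition numerical_semigroup (n : nat) (a : nat -> nat) : Prop :=
  exists N : nat, forall x : nat, (N <= x)%N -> in_sg n a predT x.

Definition min_gen_increasing (n : nat) (a : nat -> nat) : Prop :=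
  (forall i j : nat, (i < j < n)%N -> (a i < a j)%N) /\
  (forall i : nat, (i < n)%N -> ~ in_sg n a (predC1 i) (a i)).

Definition in_IH (K : fieldType) (n : nat) (a : nat -> nat) (f : {mpoly K[n]}) : Prop :=
  mmap (@polyC K) (fun i : 'I_n => 'X^(a i)) f = 0.

Definition low_deg (K : fieldType) (n : nat) (f : {mpoly K[n]}) : nat :=
  foldr minn (msize f) [seq mdeg m | m <- msupp f].

Definition initial_form (K : fieldType) (n : nat) (f : {mpoly K[n]}) : {mpoly K[n]} :=
  \sum_(m <- msupp f | mdeg m == low_deg f) f@_m *: 'X_[m].

Definition in_ideal_gen (K : fieldType) (n : nat) (G : {mpoly K[n]} -> Prop)
    (p : {mpoly K[n]}) : Prop :=
  exists s : seq ({mpoly K[n]} * {mpoly K[n]}),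
    (forall x, x \in s -> G x.2) /\ p = \sum_(x <- s) x.1 * x.2.

Definition in_IHstar (K : fieldType) (n : nat) (a : nat -> nat) (p : {mpoly K[n]}) : Prop :=
  in_ideal_gen (fun g => exists f, f <> 0 /\ in_IH a f /\ g = initial_form f) p.

Definition quadratic (K : fieldType) (n : nat) (a : nat -> nat) : Prop :=
  exists G : {mpoly K[n]} -> Prop,
    (forall g, G g -> g \is 2.-homog) /\
    (forall p : {mpoly K[n]}, in_ideal_gen G p <-> in_IHstar a p).

From HB Require Import structures.
From mathcomp Require Import all_boot all_order all_algebra.
From mathcomp Require Import mpoly zify.
From Stdlib Require Import Classical.
Set Implicit Arguments. Unset Strict Implicit. Unset Printing Implicit Defensive.
Import Order.TTheory GRing.Theory.
Local Open Scope ring_scope.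

(* For a set [C] of monomials of a common degree [D] and a monomial [k], the
   linear form "sum of the coefficients of x^k p on C" vanishes on every
   quadratic form when [deg k + 2 < D].  When [deg k + 2 >= D] it vanishes on
   every initial form f^* of f in I_H, provided [C] is closed under exchanging,
   inside x^k times a monomial of f^*, that monomial for another of the same
   weight: the monomials selected are then unions of weight classes, whose
   coefficients in f sum to 0.  So if H is quadratic, no monomial of [C] lies in
   I_H^*, while x^u is the initial form of x^u - x^w whenever u and w have the
   same weight and deg u < deg w.
   For (b), if 2 a_i is not in the other generators, C = {x_i^(a_1)} is closed,
   and x_i^(a_1) - x_1^(a_i) gives the contradiction.  For (a), take the least
   multiple h of a_1 that is the weight of a nonconstant monomial free of x_1,
   and the largest degree d of such monomials of weight h; for d > 2 these
   monomials form a closed set, contradicted through x_1^(h/a_1).  Hence d <= 2,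
   d = 1 contradicts minimality, and d = 2 gives a_1 | a_k + a_l. *)

Lemma foldr_minn_leq x0 (s : seq nat) y : y \in s -> (foldr minn x0 s <= y)%N.
Proof.
elim: s => //= z s IH; rewrite inE => /orP[/eqP->|/IH]; first exact: geq_minl.
exact: leq_trans (geq_minr _ _).
Qed.

Lemma leq_foldr_minn x0 (s : seq nat) x :
  (x <= x0)%N -> {in s, forall y, x <= y}%N -> (x <= foldr minn x0 s)%N.
Proof.
move=> h0; elim: s => //= z s IH H; rewrite leq_min H ?inE ?eqxx //=.
by apply: IH => y ys; apply: H; rewrite inE ys orbT.
Qed.

Lemma big_key_partition (R : nmodType) (T : Type) (X : eqType) (key : T -> X)
    (s : seq T) (xs : seq X) (F : T -> R) : uniq xs ->
  \sum_(t <- s | key t \in xs) F t = \sum_(x <- xs) \sum_(t <- s | key t == x) F t.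
Proof.
elim: xs => [|x xs IH] /=; first by rewrite big_nil big_pred0.
case/andP=> xNxs uxs; rewrite big_cons -IH // (bigID (fun t => key t == x)) /=.
congr (_ + _); apply: eq_bigl => t; rewrite inE.
  by case: (key t == x); rewrite ?andbF.
by case: (eqVneq (key t) x) => [->|] /=; rewrite ?(negbTE xNxs) ?andbT.
Qed.

Lemma ex_minn_classic (P : nat -> Prop) :
  (exists x, P x) -> exists x, P x /\ forall y, P y -> (x <= y)%N.
Proof.
move=> [x Px]; elim/ltn_ind: x Px => x IH Px.
case: (classic (exists y, (y < x)%N /\ P y)) => [[y [lt_yx Py]]|no_y].
  exact: IH y lt_yx Py.
exists x; split=> // y Py; rewrite leqNgt; apply/negP => lt_yx.
by apply: no_y; exists y.
Qed.

Lemma ex_maxn_classic (P : nat -> Prop) B :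
  (exists x, P x) -> (forall x, P x -> x <= B)%N ->
  exists x, P x /\ forall y, P y -> (y <= x)%N.
Proof.
move=> [x Px] le_B.
have [_ [[y [Py ->]] min_y]] := @ex_minn_classic (fun e => exists y, P y /\ e = B - y)%N
  (ex_intro _ (B - x)%N (ex_intro _ x (conj Px erefl))).
exists y; split=> // z Pz; have := min_y (B - z)%N (ex_intro _ z (conj Pz erefl)).
by have := le_B _ Pz; have := le_B _ Py; lia.
Qed.

Section Monomials.
Variable n : nat.
Local Open Scope nat_scope.
Implicit Types (m j : 'X_{1..n}).

Lemma lem_mulUn (o : 'I_n) c j : (j <= U_(o) *+ c)%MM -> j = (U_(o) *+ j o)%MM.
Proof.
move=> /mnm_lepP le_j; apply/mnmP => l; rewrite mulmnE mnm1E.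
case: (eqVneq o l) => [<-|ol]; first by rewrite mul1n.
by have := le_j l; rewrite mulmnE mnm1E (negbTE ol) mul0n leqn0 => /eqP.
Qed.

Lemma mdeg_eq2 m : mdeg m = 2 -> exists l l' : 'I_n, m = (U_(l) + U_(l'))%MM.
Proof.
move=> dm; case: (pickP (fun l => m l != 0)) => [l ml|m0]; last first.
  have /eqP : m = 0%MM by apply/mnmP => l; rewrite mnm0E; have := m0 l => /negbFE/eqP.
  by rewrite -mdeg_eq0 dm.
have le1 : (U_(l) <= m)%MM by rewrite lep1mP.
have /mdeg1P[l' /eqP el'] : mdeg (m - U_(l))%MM == 1.
  by move: dm; rewrite -{1}(submK le1) mdegD mdeg1 addn1 => -[->].
by exists l', l; rewrite -el' submK.
Qed.

End Monomials.

Section Mass.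
Variables (R : nzRingType) (n : nat).
Implicit Types (p q g : {mpoly R[n]}) (j k : 'X_{1..n}) (C : pred 'X_{1..n}).

Definition mass C k p : R := \sum_(j <- msupp p | C (k + j)%MM) p@_j.

Lemma mass_supp C k p s : uniq s -> {subset msupp p <= s} ->
  mass C k p = \sum_(j <- s | C (k + j)%MM) p@_j.
Proof.
move=> us sub; rewrite (bigID (fun j => j \in msupp p)) /=.
rewrite [X in _ = _ + X]big1 ?addr0; last by move=> j /andP[_ /memN_msupp_eq0].
rewrite (eq_bigl (fun j => (j \in msupp p) && C (k + j)%MM)); last first.
  by move=> j; rewrite andbC.
rewrite -big_filter_cond /mass; apply: perm_big.
apply: uniq_perm; rewrite ?msupp_uniq ?filter_uniq //.
by move=> j; rewrite mem_filter; case: (boolP (j \in msupp p)) => // /sub ->.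
Qed.

Lemma mass0 C k : mass C k 0 = 0.
Proof. by rewrite /mass msupp0 big_nil. Qed.

Lemma massD C k p q : mass C k (p + q) = mass C k p + mass C k q.
Proof.
set s := undup (msupp p ++ msupp q ++ msupp (p + q)).
have sub r : r \in msupp p ++ msupp q ++ msupp (p + q) -> r \in s.
  by rewrite mem_undup.
rewrite !(@mass_supp _ _ _ s (undup_uniq _)) -?big_split /=; last 3 first.
- by move=> j hj; rewrite sub // !mem_cat hj ?orbT.
- by move=> j hj; rewrite sub // !mem_cat hj ?orbT.
- by move=> j hj; rewrite sub // !mem_cat hj ?orbT.
by apply: eq_bigr => j _; rewrite mcoeffD.
Qed.

Lemma massZ C k c p : mass C k (c *: p) = c * mass C k p.
Proof.
rewrite (@mass_supp _ _ _ (msupp p) (msupp_uniq p)); last exact: msuppZ_le.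
by rewrite /mass mulr_sumr; apply: eq_bigr => j _; rewrite mcoeffZ.
Qed.

Lemma mass_sum C k (I : Type) (r : seq I) (F : I -> {mpoly R[n]}) :
  mass C k (\sum_(i <- r) F i) = \sum_(i <- r) mass C k (F i).
Proof.
elim: r => [|x r IH]; first by rewrite !big_nil mass0.
by rewrite !big_cons massD IH.
Qed.

Lemma massXM C k j g : mass C k ('X_[j] * g) = mass C (k + j)%MM g.
Proof.
rewrite -commr_mpolyX /mass (perm_big _ (msuppMX g j)) big_map.
apply: eq_big => [i|i _]; first by rewrite addmA.
by rewrite mcoeffMX.
Qed.

Lemma mass_mull (P : pred 'X_{1..n}) C q g : (forall k j, P k -> P (k + j)%MM) ->
  (forall k, P k -> mass C k g = 0) -> forall k, P k -> mass C k (q * g) = 0.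
Proof.
move=> P_up Hg k Pk; rewrite [q]mpolyE mulr_suml mass_sum big1 // => j _.
by rewrite -scalerAl massZ massXM Hg ?mulr0 // P_up.
Qed.

End Mass.

Section WeightedDegree.
Variables (n : nat) (a : nat -> nat).
Local Open Scope nat_scope.
Implicit Types (m j k : 'X_{1..n}).

Definition wdeg m : nat := \sum_(i < n) m i * a i.

Lemma wdegD m1 m2 : wdeg (m1 + m2)%MM = wdeg m1 + wdeg m2.
Proof. by rewrite /wdeg -big_split; apply: eq_bigr => i _; rewrite mnmDE mulnDl. Qed.

Lemma wdegMn m c : wdeg (m *+ c)%MM = wdeg m * c.
Proof. by rewrite /wdeg big_distrl; apply: eq_bigr => i _; rewrite mulmnE mulnAC. Qed.

Lemma wdeg_bigD1 m (o : 'I_n) :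
  wdeg m = m o * a o + \sum_(l < n | l != o) m l * a l.
Proof. by rewrite /wdeg (bigD1 o). Qed.

Lemma wdeg1 (o : 'I_n) : wdeg U_(o)%MM = a o.
Proof.
rewrite (wdeg_bigD1 _ o) mnm1E eqxx mul1n big1 ?addn0 // => l.
by rewrite mnm1E eq_sym => /negbTE ->.
Qed.

Lemma mdeg_le_wdeg m : (forall l : 'I_n, 0 < a l) -> mdeg m <= wdeg m.
Proof. by move=> a_gt0; rewrite mdegE; apply: leq_sum => l _; exact: leq_pmulr. Qed.

Lemma leq_mdeg_wdeg_off m (o : 'I_n) : (forall l : 'I_n, l != o -> a o < a l) ->
  m o = 0 -> (a o).+1 * mdeg m <= wdeg m.
Proof.
move=> a_gt m0; rewrite mdegE /wdeg big_distrr; apply: leq_sum => l _ /=.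
case: (eqVneq l o) => [->|lo]; first by rewrite m0 muln0.
by rewrite mulnC leq_mul2l a_gt ?orbT.
Qed.

Lemma in_sg_dvd (o : 'I_n) i x : (o : nat) != i -> a o %| x -> in_sg n a (predC1 i) x.
Proof.
move=> oi dvd_x; exists (fun t : nat => if t == o then x %/ a o else 0).
rewrite (bigD1 o) //= eqxx divnK // big1 ?addn0 // => l /andP[_ lo].
by rewrite val_eqE (negbTE lo).
Qed.

Lemma in_sg_wdeg_off m (o : 'I_n) :
  in_sg n a (predC1 (o : nat)) (\sum_(l < n | l != o) m l * a l).
Proof.
exists (fun x => \sum_(l : 'I_n | (l : nat) == x) m l).
apply: eq_big => [l|l _] /=; first by rewrite val_eqE.
by rewrite (@big_pred1 _ _ _ _ l) // => l'; exact: val_eqE.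
Qed.

Lemma min_gen_gt0 : min_gen_increasing n a -> forall i, i < n -> 0 < a i.
Proof.
move=> [_ hmin] i hi; rewrite lt0n; apply/negP => /eqP e.
by apply: (hmin i hi); exists (fun _ => 0); rewrite e big1.
Qed.

Lemma wdeg_off_eq0 m (o : 'I_n) : (forall l : 'I_n, 0 < a l) ->
  \sum_(l < n | l != o) m l * a l = 0 -> forall l, l != o -> m l = 0.
Proof.
move=> a_gt0 /eqP; rewrite sum_nat_eq0 => /forallP H l lo.
have := H l; rewrite lo /= muln_eq0 => /orP[/eqP //|/eqP e].
by have := a_gt0 l; rewrite e.
Qed.

End WeightedDegree.

Section InitialForms.
Variables (K : fieldType) (n : nat) (a : nat -> nat).
Implicit Types (p f g : {mpoly K[n]}) (m j k u w : 'X_{1..n}).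

Lemma mmap1_wdeg m :
  mmap1 (fun i : 'I_n => 'X^(a i) : {poly K}) m = 'X^(wdeg a m).
Proof.
rewrite /mmap1 /wdeg (big_morph (fun e : nat => 'X^e : {poly K}) (exprD 'X) (expr0 'X)).
by apply: congr_big => // i _; rewrite -exprM mulnC.
Qed.

Lemma mmapX_wdeg m : mmap (@polyC K) (fun i : 'I_n => 'X^(a i)) 'X_[m] = 'X^(wdeg a m).
Proof. by rewrite mmapX mmap1_wdeg. Qed.

Lemma in_IH_wdeg_sum f h : in_IH a f -> \sum_(j <- msupp f | wdeg a j == h) f@_j = 0.
Proof.
move=> Hf; have := congr1 (fun P : {poly K} => P`_h) Hf.
rewrite /= coef0 /mmap coef_sum => E.
apply: etrans E; rewrite big_mkcond /=.
apply: eq_bigr => j _; rewrite mmap1_wdeg coefCM coefXn eq_sym.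
by case: eqP => _; rewrite ?mulr1 ?mulr0.
Qed.

Lemma low_deg_le f m : m \in msupp f -> (low_deg f <= mdeg m)%N.
Proof. by move=> hm; apply/foldr_minn_leq/map_f. Qed.

Lemma low_deg_ge f x : (x <= msize f)%N ->
  (forall m, m \in msupp f -> x <= mdeg m)%N -> (x <= low_deg f)%N.
Proof. by move=> h1 h2; apply: leq_foldr_minn => // y /mapP[m hm ->]; exact: h2. Qed.

Lemma mcoeff_initial_form f m :
  (initial_form f)@_m = if mdeg m == low_deg f then f@_m else 0.
Proof.
rewrite /initial_form raddf_sum /= big_mkcond /=.
rewrite (eq_bigr (fun j =>
  if j == m then (if mdeg m == low_deg f then f@_m else 0) else 0)); last first.
  move=> j _; rewrite mcoeffZ mcoeffX.
  by case: (eqVneq j m) => [->|ne]; rewrite ?mulr1 // mulr0; case: ifP.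
case: (boolP (m \in msupp f)) => hm.
  rewrite (bigD1_seq m hm (msupp_uniq f)) /= eqxx big1 ?addr0 //.
  by move=> j /negbTE ->.
rewrite big1_seq; first by rewrite (memN_msupp_eq0 hm); case: ifP.
move=> j /andP[_ jin]; case: (eqVneq j m) => [ej|//].
by move: hm; rewrite -ej jin.
Qed.

End InitialForms.

Section Obstruction.
Variables (K : fieldType) (n : nat) (a : nat -> nat).
Implicit Types (p f g : {mpoly K[n]}) (m j k u w : 'X_{1..n}) (P C : pred 'X_{1..n}).

Definition wdeg_closed P C := forall k j j', P k -> C (k + j)%MM ->
  wdeg a j' = wdeg a j -> (mdeg j <= mdeg j')%N -> mdeg j' = mdeg j /\ C (k + j')%MM.

Lemma mass_initial_form P C f k : wdeg_closed P C -> in_IH a f -> P k ->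
  mass C k (initial_form f) = 0.
Proof.
move=> clPC Hf Pk.
rewrite (@mass_supp _ _ _ _ _ (msupp f) (msupp_uniq f)); last first.
  move=> j; rewrite !mcoeff_msupp mcoeff_initial_form.
  by case: ifP => //; rewrite eqxx.
rewrite (eq_bigr (fun j => if mdeg j == low_deg f then f@_j else 0)); last first.
  by move=> j _; rewrite mcoeff_initial_form.
rewrite -big_mkcondr /=.
set Q := fun j => C (k + j)%MM && (mdeg j == low_deg f).
set hs := undup [seq wdeg a j | j <- msupp f & Q j].
have Q_fibre j : j \in msupp f -> Q j = (wdeg a j \in hs).
  move=> jf; rewrite mem_undup; apply/idP/idP => [Qj|].
    by apply: map_f; rewrite mem_filter Qj.
  case/mapP=> j0; rewrite mem_filter => /andP[/andP[C0 /eqP d0] j0f] eH.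
  have le_j0j : (mdeg j0 <= mdeg j)%N by rewrite d0 low_deg_le.
  have [dj Cj] := clPC k j0 j Pk C0 eH le_j0j.
  by rewrite /Q Cj dj d0 eqxx.
rewrite big_seq_cond (eq_bigl (fun j => (j \in msupp f) && (wdeg a j \in hs))); last first.
  by move=> j; case: (boolP (j \in msupp f)) => //= jf; rewrite -Q_fibre.
rewrite -big_seq_cond big_key_partition ?undup_uniq // big1 // => h _.
exact: in_IH_wdeg_sum.
Qed.

Lemma mass_ideal P (G : {mpoly K[n]} -> Prop) C p :
  (forall k j, P k -> P (k + j)%MM) ->
  (forall g, G g -> forall k, P k -> mass C k g = 0) ->
  in_ideal_gen G p -> forall k, P k -> mass C k p = 0.
Proof.
move=> P_up HG [s [Hs ->]] k Pk; rewrite mass_sum big1_seq // => x /andP[_ xs].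
exact: (mass_mull x.1 P_up (HG _ (Hs _ xs)) Pk).
Qed.

Lemma mass_IHstar P C p : wdeg_closed P C -> (forall k j, P k -> P (k + j)%MM) ->
  in_IHstar a p -> forall k, P k -> mass C k p = 0.
Proof.
move=> clPC P_up; apply: mass_ideal => // _ [f [_ [Hf ->]]] k Pk.
exact: mass_initial_form clPC Hf Pk.
Qed.

Lemma monomial_notin_IHstar C (D : nat) u : quadratic K n a ->
  (forall v, C v -> mdeg v = D) ->
  wdeg_closed (fun k => D <= mdeg k + 2)%N C -> C u ->
  ~ in_IHstar a ('X_[u] : {mpoly K[n]}).
Proof.
move=> [G [G_homog G_gen]] CD clC Cu /G_gen Gu.
have P_up k j : (D <= mdeg k + 2 -> D <= mdeg (k + j)%MM + 2)%N.
  by rewrite mdegD; lia.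
have mass_G g : G g -> forall k, true -> mass C k g = 0.
  move=> Gg k _; case: (leqP D (mdeg k + 2)) => hk.
    apply: (mass_IHstar clC P_up) hk; apply/G_gen.
    exists [:: (1, g)]; rewrite big_seq1 mul1r; split=> // x.
    by rewrite inE => /eqP ->.
  rewrite /mass big1_seq // => j /andP[Cj jg].
  have := dhomog_mf (G_homog g Gg) jg; have := CD _ Cj; rewrite mdegD /=; lia.
have := @mass_ideal (fun _ => true) G C _ (fun _ _ _ => erefl) mass_G Gu 0%MM erefl.
rewrite /mass msuppX big_cons big_nil add0m Cu mcoeffX eqxx addr0 => /eqP.
by rewrite oner_eq0.
Qed.

Lemma monomial_in_IHstar u w : wdeg a u = wdeg a w -> (mdeg u < mdeg w)%N ->
  in_IHstar a ('X_[u] : {mpoly K[n]}).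
Proof.
move=> eH ltd.
have nuw : u != w by apply/eqP => e; move: ltd; rewrite e ltnn.
set f : {mpoly K[n]} := 'X_[u] - 'X_[w].
have fc m : f@_m = (u == m)%:R - (w == m)%:R by rewrite mcoeffB !mcoeffX.
have fu : f@_u = 1 by rewrite fc eqxx eq_sym (negbTE nuw) subr0.
have uf : u \in msupp f by rewrite mcoeff_msupp fu oner_eq0.
have supp_f m : m \in msupp f -> m = u \/ m = w.
  rewrite mcoeff_msupp fc; case: (eqVneq u m) => [->|]; first by left.
  by case: (eqVneq w m) => [->|] _ _; [right | rewrite subrr eqxx].
have low_f : low_deg f = mdeg u.
  apply/eqP; rewrite eqn_leq low_deg_le //=.
  apply: low_deg_ge; first exact: ltnW (msize_mdeg_lt uf).
  by move=> m /supp_f [->|->] //; exact: ltnW.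
exists [:: (1, 'X_[u])]; rewrite big_seq1 mul1r; split=> // x.
rewrite inE => /eqP -> /=; exists f; split; last split.
- by move=> f0; move: fu; rewrite f0 mcoeff0 => /eqP; rewrite eq_sym oner_eq0.
- by rewrite /in_IH /f raddfB /= !mmapX_wdeg eH subrr.
apply/mpolyP => m; rewrite mcoeff_initial_form low_f fc mcoeffX.
case: (eqVneq u m) => [<-|ne]; first by rewrite eqxx eq_sym (negbTE nuw) subr0.
case: (eqVneq w m) => [em|]; last by rewrite subrr; case: ifP.
by rewrite -em; case: eqP => // e; move: ltd; rewrite e ltnn.
Qed.

End Obstruction.

Section DoubleGenerator.
Variables (n : nat) (a : nat -> nat) (o : 'I_n).
Local Open Scope nat_scope.
Hypotheses (a_gt0 : forall l : 'I_n, 0 < a l)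
  (a_notin : ~ in_sg n a (predC1 (o : nat)) (a o))
  (a2_notin : ~ in_sg n a (predC1 (o : nat)) (2 * a o)).

Lemma wdeg_eq_mulUn j s : s <= 2 -> wdeg a j = s * a o -> j = (U_(o) *+ s)%MM.
Proof.
move=> s_le2; rewrite (wdeg_bigD1 _ _ o).
set r := \sum_(l < n | l != o) _ => e.
have r_in : in_sg n a (predC1 (o : nat)) r by exact: in_sg_wdeg_off.
have a_o_gt0 := a_gt0 o.
have [r0 jo] : r = 0 /\ j o = s.
  case: (ltnP (j o) s) => [lt_js|le_sj]; last first.
    have /eqP : (j o - s) * a o + r = 0 by move: e; rewrite -{1}(subnK le_sj) mulnDl; lia.
    by rewrite addn_eq0 muln_eq0 [a o == 0]eqn0Ngt a_o_gt0 orbF; lia.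
  exfalso; have : s - j o = 1 \/ s - j o = 2 by lia.
  case=> e'.
    by apply: a_notin; have -> : a o = r by nia.
  by apply: a2_notin; have -> : 2 * a o = r by nia.
apply/mnmP => l; rewrite mulmnE mnm1E; case: (eqVneq o l) => [<-|ol].
  by rewrite mul1n.
by rewrite mul0n (wdeg_off_eq0 a_gt0 r0) // eq_sym.
Qed.

Lemma closed_mulUn c : wdeg_closed a (fun k => c <= mdeg k + 2) (pred1 (U_(o) *+ c)%MM).
Proof.
move=> k j j' /= Pk /eqP kj eH _.
have ej : j = (U_(o) *+ j o)%MM by apply: (@lem_mulUn _ o c); rewrite -kj lem_addl.
have dj : mdeg j = j o by rewrite {1}ej mdegMn mdeg1 mul1n.
have jo_le2 : j o <= 2 by move: (congr1 mdeg kj); rewrite mdegD dj mdegMn mdeg1; lia.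
have wj : wdeg a j = j o * a o by rewrite {1}ej wdegMn wdeg1 mulnC.
have -> : j' = j by rewrite [RHS]ej; apply: wdeg_eq_mulUn; rewrite // eH.
by rewrite kj.
Qed.

End DoubleGenerator.

Lemma quadratic_double_in_sg (K : fieldType) n a :
  (1 < n)%N -> min_gen_increasing n a -> quadratic K n a ->
  forall i, (1 <= i < n)%N -> in_sg n a (predC1 i) (2 * a i)%N.
Proof.
move=> n_gt1 hmg hq i /andP[i_gt0 i_lt_n]; apply: NNPP => a2_notin.
have [a_incr a_min] := hmg.
have a_gt0 (l : 'I_n) : (0 < a l)%N := min_gen_gt0 hmg (ltn_ord l).
pose o : 'I_n := Ordinal i_lt_n; pose o0 : 'I_n := Ordinal (ltnW n_gt1).
pose u := (U_(o) *+ a 0%N)%MM.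
apply: (@monomial_notin_IHstar K n a (pred1 u) (a 0%N) u hq).
- by move=> v /eqP ->; rewrite mdegMn mdeg1 mul1n.
- exact: (@closed_mulUn _ _ o a_gt0 (a_min i i_lt_n) a2_notin (a 0%N)).
- exact: eqxx.
apply: (@monomial_in_IHstar K n a u (U_(o0) *+ a i)%MM).
  by rewrite !wdegMn !wdeg1 mulnC.
by rewrite !mdegMn !mdeg1 !mul1n a_incr // i_gt0.
Qed.

Section LeastDivisibleWeight.
Variables (n : nat) (a : nat -> nat) (o : 'I_n) (h d : nat).
Local Open Scope nat_scope.
Hypotheses (a_o_gt0 : 0 < a o) (dvd_h : a o %| h)
  (h_min : forall v : 'X_{1..n}, v o = 0 -> 0 < mdeg v -> a o %| wdeg a v -> h <= wdeg a v)
  (d_max : forall v : 'X_{1..n}, v o = 0 -> 0 < mdeg v -> wdeg a v = h -> mdeg v <= d).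

Lemma closed_top_degree : 2 < d ->
  wdeg_closed a (fun k => d <= mdeg k + 2)
    [pred v : 'X_{1..n} | [&& v o == 0, wdeg a v == h & mdeg v == d]].
Proof.
move=> d_gt2 k j j' /= Pk /and3P[/eqP kj0 /eqP kjH /eqP kjd] eH le_jj'.
have k0 : k o = 0 by move: kj0; rewrite mnmDE; lia.
have dk : 0 < mdeg k by move: kjd; rewrite mdegD; lia.
case: (eqVneq (j' o) 0) => [j'0|j'o_neq0].
  have w0 : (k + j')%MM o = 0 by rewrite mnmDE k0 j'0.
  have wH : wdeg a (k + j')%MM = h by rewrite wdegD eH -wdegD.
  have : mdeg (k + j')%MM <= d by apply: d_max => //; rewrite mdegD; lia.
  rewrite !mdegD in kjd * => le_d.
  have ej : mdeg j' = mdeg j by lia.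
  by rewrite w0 wH ej kjd !eqxx.
exfalso; set c := j' o.
have le_c : (U_(o) *+ c <= j')%MM.
  by apply/mnm_lepP => l; rewrite mulmnE mnm1E; case: (eqVneq o l) => [<-|] /=; lia.
pose w := (k + (j' - U_(o) *+ c))%MM.
have w0 : w o = 0 by rewrite mnmDE mnmBE mulmnE mnm1E eqxx k0; lia.
have wH : wdeg a w + c * a o = h.
  have : wdeg a j' = wdeg a (j' - U_(o) *+ c)%MM + c * a o.
    by rewrite -{1}(submK le_c) wdegD wdegMn wdeg1 mulnC.
  by move: kjH; rewrite /w !wdegD; lia.
have : h <= wdeg a w.
  apply: h_min => //; first by rewrite /w mdegD; lia.
  have -> : wdeg a w = h - c * a o by lia.
  by rewrite dvdn_sub // dvdn_mull.
have : 0 < c * a o by rewrite muln_gt0 lt0n j'o_neq0.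
lia.
Qed.

End LeastDivisibleWeight.

Lemma quadratic_dvd_sum (K : fieldType) n a :
  (1 < n)%N -> min_gen_increasing n a -> quadratic K n a ->
  exists k l : nat, [/\ (1 <= k < n)%N, (1 <= l < n)%N & (a 0 %| a k + a l)%N].
Proof.
move=> n_gt1 hmg hq; have [a_incr a_min] := hmg.
have a_gt0 (l : 'I_n) : (0 < a l)%N := min_gen_gt0 hmg (ltn_ord l).
pose o0 : 'I_n := Ordinal (ltnW n_gt1); pose o1 : 'I_n := Ordinal n_gt1.
have ord_gt0 (l : 'I_n) : l != o0 -> (0 < l)%N.
  by rewrite lt0n; apply: contra => /eqP e; apply/eqP/val_inj.
have a0_lt (l : 'I_n) : l != o0 -> (a 0%N < a l)%N.
  by move/ord_gt0 => l_gt0; apply: a_incr; rewrite l_gt0 ltn_ord.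
pose W h := exists v : 'X_{1..n}, [/\ v o0 = 0, 0 < mdeg v, wdeg a v = h & a 0%N %| h]%N.
have W_ex : exists h, W h.
  exists (a 1 * a 0)%N, (U_(o1) *+ a 0%N)%MM.
  rewrite mulmnE mnm1E mdegMn mdeg1 mul1n wdegMn wdeg1 dvdn_mull //.
  by split => //; exact: (a_gt0 o0).
have [h [[v [v0 v_gt0 vh dvd_h]] h_min]] := ex_minn_classic W_ex.
pose D d := exists u : 'X_{1..n}, [/\ u o0 = 0, 0 < mdeg u, wdeg a u = h & mdeg u = d]%N.
have [d [[u [u0 u_gt0 uh ud]] d_max]] : exists d, D d /\ forall y, D y -> (y <= d)%N.
  apply: (@ex_maxn_classic _ h); first by exists (mdeg v), v.
  by move=> _ [w [_ _ <- <-]]; apply: mdeg_le_wdeg.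
have d_le2 : (d <= 2)%N.
  rewrite leqNgt; apply/negP => d_gt2.
  have h_min' (w : 'X_{1..n}) : w o0 = 0%N -> (0 < mdeg w)%N -> (a o0 %| wdeg a w)%N ->
    (h <= wdeg a w)%N by move=> w0 w_gt0 dvd_w; apply: h_min; exists w.
  have d_max' (w : 'X_{1..n}) : w o0 = 0%N -> (0 < mdeg w)%N -> wdeg a w = h ->
    (mdeg w <= d)%N by move=> w0 w_gt0 wh; apply: d_max; exists w.
  have clC := closed_top_degree (a_gt0 o0) dvd_h h_min' d_max' d_gt2.
  apply: (@monomial_notin_IHstar K n a _ d u hq _ clC).
  - by move=> w /and3P[_ _ /eqP].
  - by rewrite /= u0 uh ud !eqxx.
  apply: (@monomial_in_IHstar K n a u (U_(o0) *+ (h %/ a 0%N))%MM).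
    by rewrite wdegMn wdeg1 mulnC divnK.
  rewrite mdegMn mdeg1 mul1n ltn_divRL ?(a_gt0 o0) // -uh.
  have := leq_mdeg_wdeg_off a0_lt u0; rewrite (_ : a o0 = a 0%N) //; nia.
have [d1|d2] : d = 1%N \/ d = 2%N by lia.
  move: ud; rewrite d1 => /eqP/mdeg1P[l /eqP ul].
  have lo : (o0 : nat) != l.
    by apply: contra_eqN u0 => /eqP e; rewrite ul mnm1E (_ : l = o0) ?eqxx //; exact: val_inj.
  exfalso; apply: (a_min l (ltn_ord l)); apply: (in_sg_dvd lo).
  by rewrite -(wdeg1 a l) -ul uh.
move: ud; rewrite d2 => /mdeg_eq2[l [l' ul]].
move: u0; rewrite ul mnmDE !mnm1E => /eqP; rewrite addn_eq0 !eqb0 => /andP[lo l'o].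
exists l, l'; rewrite !ord_gt0 ?ltn_ord //; split=> //.
by rewrite -(wdeg1 a l) -(wdeg1 a l') -wdegD -ul uh.
Qed.

Theorem lemma1p6 (K : fieldType) (n : nat) (a : nat -> nat) :
  (1 < n)%N ->
  numerical_semigroup n a ->
  min_gen_increasing n a ->
  quadratic K n a ->
  (exists k l : nat, [/\ (1 <= k < n)%N, (1 <= l < n)%N & (a 0 %| a k + a l)%N]) /\
  (forall i : nat, (1 <= i < n)%N -> in_sg n a (predC1 i) (2 * a i)%N).
Proof.
move=> n_gt1 _ hmg hq; split.
- exact: quadratic_dvd_sum hq.
- exact: quadratic_double_in_sg hq.
Qed.
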